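(* Let $\Gamma=(V,\nu,\mu)$ be a fuzzy graph on $n$ vertices with fuzzy complement $\overline{\Gamma}$. For $v\in V$ put $d_{\max}(v)=\sum_{u\ne v}\min(\nu(v),\nu(u))$, $\lambda_{\max}=\frac1n\sum_{v\in V}d_{\max}(v)$, $e(v)=d_{\max}(v)-\lambda_{\max}$, and $E=\frac1n\sum_{v\in V}e(v)^2$. Then $$2\,\sigma^*(\Gamma)+E-2\sqrt{\sigma^*(\Gamma)\,E}\;\le\;\sigma^*(\Gamma)+\sigma^*(\overline{\Gamma})\;\le\;2\,\sigma^*(\Gamma)+E+2\sqrt{\sigma^*(\Gamma)\,E}.$$
   Context: A fuzzy graph $\Gamma=(V,\nu,\mu)$ consists of a finite vertex set $V$ with $|V|=n\ge1$, a map $\nu:V\to[0,1]$, and a symmetric map $\mu:V\times V\to[0,1]$ with $\mu(u,v)\le\min(\nu(u),\nu(v))$. The fuzzy degree is $d_\Gamma(v)=\sum_{u\ne v}\mu(v,u)$, the fuzzy size is $\mathrm{ew}(\Gamma)=\frac12\sum_v d_\Gamma(v)$, $\lambda=2\,\mathrm{ew}(\Gamma)/n$, and the fuzzy sigma index is $\sigma^*(\Gamma)=\frac1n\sum_{v}(d_\Gamma(v)-\lambda)^2$. The fuzzy complement $\overline{\Gamma}=(V,\nu,\overline{\mu})$ has $\overline{\mu}(u,v)=\min(\nu(u),\nu(v))-\mu(u,v)$ for $u\ne v$. *)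

From mathcomp Require Import all_boot all_order all_algebra.
Set Implicit Arguments. Unset Strict Implicit. Unset Printing Implicit Defensive.
Import Order.TTheory GRing.Theory Num.Theory.
Local Open Scope ring_scope.

Definition is_fuzzy_graph (R : realFieldType) (T : finType)
  (nu : T -> R) (mu : T -> T -> R) : Prop :=
  (forall v, 0 <= nu v <= 1) /\
  (forall u v, 0 <= mu u v <= 1) /\
  (forall u v, mu u v = mu v u) /\
  (forall u v, mu u v <= Num.min (nu u) (nu v)).

Section Fuzzy.
Variables (R : realFieldType) (T : finType).

Definition fdeg (mu : T -> T -> R) (v : T) : R := \sum_(u | u != v) mu v u.
Definition fsize (mu : T -> T -> R) : R := (\sum_v fdeg mu v) / 2.
Definition flambda (mu : T -> T -> R) : R := 2 * fsize mu / #|T|%:R.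
Definition fsigma (mu : T -> T -> R) : R :=
  (\sum_v (fdeg mu v - flambda mu) ^+ 2) / #|T|%:R.
Definition fcompl (nu : T -> R) (mu : T -> T -> R) : T -> T -> R :=
  fun u v => if u == v then mu u v else Num.min (nu u) (nu v) - mu u v.

Definition dmax (nu : T -> R) (v : T) : R :=
  \sum_(u | u != v) Num.min (nu v) (nu u).
Definition lambda_max (nu : T -> R) : R := (\sum_v dmax nu v) / #|T|%:R.
Definition emax (nu : T -> R) (v : T) : R := dmax nu v - lambda_max nu.
Definition Emax (nu : T -> R) : R := (\sum_v emax nu v ^+ 2) / #|T|%:R.
End Fuzzy.

From mathcomp Require Import all_boot all_order all_algebra.
From mathcomp Require Import ring lra.
Set Implicit Arguments. Unset Strict Implicit. Unset Printing Implicit Defensive.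
Import Order.TTheory GRing.Theory Num.Theory.
Local Open Scope ring_scope.

(* The degree of a vertex in the complement is d_max(v) - d(v), so sigma* of
   the complement is the variance of d_max - d, which expands to
   E + sigma*(Gamma) - 2 Cov(d_max, d).  By Cauchy-Schwarz,
   |Cov(d_max, d)| <= sqrt(sigma*(Gamma) E), which gives both bounds. *)

Section CauchySchwarz.
Variables (R : realFieldType) (T : finType).
Implicit Types a b : T -> R.

Lemma Lagrange_identity a b :
  \sum_v \sum_w (a v * b w - a w * b v) ^+ 2 =
  2 * ((\sum_v a v ^+ 2) * (\sum_v b v ^+ 2) - (\sum_v a v * b v) ^+ 2).
Proof.
set A := \sum_v a v ^+ 2; set B := \sum_v b v ^+ 2; set C := \sum_v a v * b v.
have inner v : \sum_w (a v * b w - a w * b v) ^+ 2 =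
    a v ^+ 2 * B + A * b v ^+ 2 - 2 * (a v * b v) * C.
  rewrite /A /B /C !mulr_sumr mulr_suml -big_split -sumrB /=.
  by apply: eq_bigr => w _; ring.
under eq_bigr do rewrite inner.
by rewrite sumrB big_split /= -!mulr_suml -!mulr_sumr -/A -/B -/C; ring.
Qed.

Lemma Cauchy_Schwarz_sum a b :
  (\sum_v a v * b v) ^+ 2 <= (\sum_v a v ^+ 2) * (\sum_v b v ^+ 2).
Proof.
have : 0 <= \sum_v \sum_w (a v * b w - a w * b v) ^+ 2.
  by apply: sumr_ge0 => v _; apply: sumr_ge0 => w _; exact: sqr_ge0.
rewrite Lagrange_identity; lra.
Qed.

End CauchySchwarz.

Section Variance.
Variables (R : realFieldType) (T : finType).
Implicit Types f g : T -> R.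

Definition mean f : R := (\sum_v f v) / #|T|%:R.
Definition variance f : R := (\sum_v (f v - mean f) ^+ 2) / #|T|%:R.
Definition covariance f g : R :=
  (\sum_v (f v - mean f) * (g v - mean g)) / #|T|%:R.

Lemma eq_mean f g : f =1 g -> mean f = mean g.
Proof. by move=> fg; rewrite /mean; under eq_bigr do rewrite fg. Qed.

Lemma eq_variance f g : f =1 g -> variance f = variance g.
Proof.
by move=> fg; rewrite /variance (eq_mean fg); under eq_bigr do rewrite fg.
Qed.

Lemma meanB f g : mean (fun v => f v - g v) = mean f - mean g.
Proof. by rewrite /mean sumrB mulrBl. Qed.

Lemma varianceB f g :
  variance (fun v => f v - g v) = variance f + variance g - 2 * covariance f g.
Proof.
rewrite /variance /covariance meanB; move: (mean f) (mean g) => mf mg.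
rewrite -!mulrDl mulrA -mulrBl mulr_sumr -big_split -sumrB /=.
by congr (_ / _); apply: eq_bigr => v _; ring.
Qed.

End Variance.

Lemma covariance_le_sqrt (R : rcfType) (T : finType) (f g : T -> R) :
  `|covariance f g| <= Num.sqrt (variance f * variance g).
Proof.
rewrite /covariance /variance -sqrtr_sqr; apply: ler_wsqrtr.
rewrite expr_div_n mulrACA -expr2 -exprVn.
apply: ler_wpM2r; first exact: sqr_ge0.
exact: Cauchy_Schwarz_sum.
Qed.

Section FuzzyVariance.
Variables (R : realFieldType) (T : finType).
Implicit Types (nu : T -> R) (mu : T -> T -> R).

Lemma flambdaE mu : flambda mu = mean (fdeg mu).
Proof. by rewrite /flambda /fsize /mean mulrCA mulfV ?mulr1 // pnatr_eq0. Qed.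

Lemma fsigmaE mu : fsigma mu = variance (fdeg mu).
Proof. by rewrite /fsigma flambdaE. Qed.

Lemma EmaxE nu : Emax nu = variance (dmax nu).
Proof. by []. Qed.

Lemma fdeg_fcompl nu mu v : fdeg (fcompl nu mu) v = dmax nu v - fdeg mu v.
Proof.
rewrite /fdeg /dmax -sumrB; apply: eq_bigr => u uv.
by rewrite /fcompl eq_sym (negbTE uv).
Qed.

Lemma fsigma_fcompl nu mu :
  fsigma (fcompl nu mu) =
  Emax nu + fsigma mu - 2 * covariance (dmax nu) (fdeg mu).
Proof. by rewrite !fsigmaE (eq_variance (fdeg_fcompl nu mu)) varianceB. Qed.

End FuzzyVariance.

Theorem corollary2p13 (R : rcfType) (T : finType) (nu : T -> R) (mu : T -> T -> R) :
  (0 < #|T|)%N -> is_fuzzy_graph nu mu ->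
  let s := fsigma mu in
  let sc := fsigma (fcompl nu mu) in
  let E := Emax nu in
  2 * s + E - 2 * Num.sqrt (s * E) <= s + sc /\
  s + sc <= 2 * s + E + 2 * Num.sqrt (s * E).
Proof.
move=> _ _ s sc E.
have -> : s + sc = 2 * s + E - 2 * covariance (dmax nu) (fdeg mu).
  by rewrite /sc fsigma_fcompl -/s -/E; ring.
have := covariance_le_sqrt (dmax nu) (fdeg mu).
rewrite -EmaxE -fsigmaE -/s -/E mulrC ler_norml => /andP[lo hi].
split; lra.
Qed.
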